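(* Fix integers $p\ge 3$, $q\ge 1$ and a real $\eta$ with $0<\eta<\frac{1}{7p^5q}$. For all sufficiently large $n$, for the graph $G$ described in the context, the set $S=\{v\in V(G): d_G(v)\le (\frac{p-1}{p}-5\eta)n\}$ satisfies $|S|\le \eta n$.
   Context: $B_{p,q}=K_p\nabla qK_1$ is the join of a clique $K_p$ and an independent set of $q$ vertices. $\mathcal{G}(n,p,q)$ is the set of $n$-vertex graphs with chromatic number greater than $p$ that contain no subgraph isomorphic to $B_{p,q}$ and have the maximum number of edges among all such graphs. $G$ is a graph in $\mathcal{G}(n,p,q)$ whose minimum degree equals $\min_{F\in\mathcal{G}(n,p,q)}\delta(F)$. $d_G(v)$ is the degree of $v$ in $G$. *)

From mathcomp Require Import all_boot all_order all_algebra.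
From mathcomp Require Import reals.
Set Implicit Arguments. Unset Strict Implicit. Unset Printing Implicit Defensive.

Definition simple_graph (T : finType) (g : rel T) : Prop :=
  (forall x, ~~ g x x) /\ (forall x y, g x y = g y x).

Definition n_edges (n : nat) (g : rel 'I_n) : nat :=
  #|[set e : 'I_n * 'I_n | (val e.1 < val e.2)%N && g e.1 e.2]|.

Definition deg (T : finType) (g : rel T) (v : T) : nat := #|[set u | g v u]|.

(* minimum degree (the default n is irrelevant for n > 0, as degrees are < n) *)
Definition mindeg (n : nat) (g : rel 'I_n) : nat :=
  \big[minn/n]_(v : 'I_n) deg g v.

Definition colorable (T : finType) (g : rel T) (k : nat) : Prop :=
  exists c : T -> 'I_k, forall x y, g x y -> c x != c y.

Definition chi_gt (T : finType) (g : rel T) (p : nat) : Prop := ~ colorable g p.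

(* B_{p,q} = K_p join (q K_1) on vertex set 'I_p + 'I_q *)
Definition B_adj (p q : nat) : rel ('I_p + 'I_q)%type :=
  fun x y => match x, y with
             | inl i, inl j => i != j
             | inl _, inr _ => true
             | inr _, inl _ => true
             | inr _, inr _ => false
             end.

Definition contains_subgraph (TH TG : finType) (h : rel TH) (g : rel TG) : Prop :=
  exists f : TH -> TG, injective f /\ forall x y, h x y -> g (f x) (f y).

Definition admissible (n p q : nat) (g : rel 'I_n) : Prop :=
  simple_graph g /\ chi_gt g p /\ ~ contains_subgraph (@B_adj p q) g.

Definition in_calG (n p q : nat) (g : rel 'I_n) : Prop :=
  admissible p q g /\ forall f : rel 'I_n, admissible p q f -> (n_edges f <= n_edges g)%N.

From mathcomp Require Import all_boot all_order all_algebra.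
From mathcomp Require Import reals.
From mathcomp Require Import zify ring lra.
Import Order.TTheory GRing.Theory Num.Theory.
Set Implicit Arguments. Unset Strict Implicit. Unset Printing Implicit Defensive.

(* The blow-up of C5 joined with K_(p-2) is (p+1)-chromatic, has no K_(p+1) (hence
   no B_(p,q)), and has (1 - 1/p) n^2/2 - O(n) edges, so every G in G(n,p,q) is at
   least that dense.  If more than eta n vertices had degree at most
   ((p-1)/p - 5 eta) n, deleting ceil(eta n) of them would leave a graph whose
   potential 2e(U) - c |U| (|U| + 1), with c = (p-1)/p + eta^2, is at least
   (2 eta n)^2.  Deleting vertices of degree below c |U| never decreases the
   potential, and ends in a subgraph U of order at least 2 eta n and minimum degree
   at least c |U|.  In it, p greedily chosen pairwise adjacent vertices keep a
   common neighbourhood of size at least p eta^2 |U| >= q: a copy of B_(p,q). *)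

Lemma card_set_in_sum (T : finType) (U : {set T}) (P : pred T) :
  #|[set x in U | P x]| = \sum_(x in U) P x.
Proof.
rewrite -sum1_card big_mkcond [RHS]big_mkcond; apply: eq_bigr => x _.
by rewrite inE; case: (x \in U); case: (P x).
Qed.

Lemma exists_subset_card (T : finType) (A : {set T}) k :
  (k <= #|A|)%N -> exists2 B : {set T}, B \subset A & #|B| = k.
Proof.
rewrite -bin_gt0 -cards_draws => /card_gt0P [B].
by rewrite inE => /andP [sBA /eqP cardB]; exists B.
Qed.

Lemma leq_card_in_nat (T : finType) (A : {set T}) (f : T -> nat) m :
  {in A &, injective f} -> {in A, forall x, (f x < m)%N} -> (#|A| <= m)%N.
Proof.
move=> f_inj f_lt; rewrite -(size_image f) -(size_iota 0 m) uniq_leq_size //.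
  by rewrite map_inj_in_uniq ?enum_uniq // => x y; rewrite !mem_enum; exact: f_inj.
by move=> _ /imageP [x xA ->]; rewrite mem_iota add0n f_lt.
Qed.

Lemma card_ord_lt n m : (#|[set u : 'I_n | u < m]| <= m)%N.
Proof.
by apply: (@leq_card_in_nat _ _ val) => [x y _ _ /val_inj | x] //; rewrite inE.
Qed.

Lemma card_residue_class n p r : (0 < p)%N ->
  (#|[set u : 'I_n | u %% p == r]| <= n %/ p + 1)%N.
Proof.
move=> p_gt0; apply: (@leq_card_in_nat _ _ (fun u : 'I_n => u %/ p)) => [x y | x _].
  rewrite !inE => /eqP rx /eqP ry eq_div; apply: val_inj.
  by rewrite /= (divn_eq x p) (divn_eq y p) eq_div rx ry.
by rewrite addn1 ltnS leq_div2r // ltnW.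
Qed.

Section Graph.
Variables (T : finType) (g : rel T).
Hypothesis g_simple : simple_graph g.

Definition deg_in (U : {set T}) (v : T) : nat := #|[set u in U | g v u]|.
Definition degsum (U : {set T}) : nat := \sum_(v in U) deg_in U v.

Lemma deg_inE U v : deg_in U v = \sum_(u in U) g v u.
Proof. exact: card_set_in_sum. Qed.

Lemma deg_in_setT v : deg_in setT v = deg g v.
Proof. by apply: eq_card => u; rewrite !inE. Qed.

Lemma deg_in_le U v : (deg_in U v <= #|U|)%N.
Proof. by apply: subset_leq_card; apply/subsetP => u; rewrite inE => /andP []. Qed.

Lemma degsum_le_sq U : (degsum U <= #|U| ^ 2)%N.
Proof.
by rewrite /degsum -mulnn -sum_nat_const; apply: leq_sum => v _; exact: deg_in_le.
Qed.

Lemma degsum_setD U A :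
  (degsum U <= degsum (U :\: A) + 2 * \sum_(a in U :&: A) deg_in U a)%N.
Proof.
have [_ g_sym] := g_simple.
rewrite /degsum (big_setID A) /=.
set X := \sum_(a in U :&: A) deg_in U a.
suff : (\sum_(v in U :\: A) deg_in U v <= \sum_(v in U :\: A) deg_in (U :\: A) v + X)%N
  by lia.
have split_deg v :
    deg_in U v = (\sum_(u in U :&: A) g v u + deg_in (U :\: A) v)%N.
  by rewrite !deg_inE (big_setID A).
rewrite (eq_bigr _ (fun v _ => split_deg v)) big_split /= addnC leq_add2l /X.
apply: (@leq_trans (\sum_(v in U) \sum_(u in U :&: A) g v u)).
  by rewrite [leqRHS](big_setID A) leq_addl.
rewrite exchange_big /=; apply: leq_sum => a _; rewrite deg_inE.
by under eq_bigr => v _ do rewrite g_sym.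
Qed.

Lemma degsum_setD1 (U : {set T}) v : v \in U ->
  (degsum U <= degsum (U :\ v) + 2 * deg_in U v)%N.
Proof.
move=> vU; have := degsum_setD U [set v].
by rewrite (setIidPr _) ?sub1set // big_set1.
Qed.

Definition clique (K : {set T}) : Prop := {in K &, forall x y, x != y -> g x y}.

Definition common_nbhd (U K : {set T}) : {set T} := [set u in U | [forall x in K, g x u]].

Lemma clique_common_nbhd_contains_B p q (K U : {set T}) :
  #|K| = p -> clique K -> (q <= #|common_nbhd U K|)%N ->
  contains_subgraph (@B_adj p q) g.
Proof.
have [g_irr g_sym] := g_simple.
set W := common_nbhd U K => cardK cliqueK cardW.
have adjKW x w : x \in K -> w \in W -> g x w.
  by move=> xK; rewrite inE => /andP [_ /forall_inP]; apply.
pose f z := match z with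
  | inl i => enum_val (A := K) (cast_ord (esym cardK) i)
  | inr k => enum_val (A := W) (widen_ord cardW k) end.
have fK i : f (inl i) \in K by exact: enum_valP.
have fW k : f (inr k) \in W by exact: enum_valP.
have fKW i k : g (f (inl i)) (f (inr k)) by exact: adjKW.
exists f; split.
- case=> [i|k] [j|l] /= eq_f.
  + by move: eq_f => /enum_val_inj /(congr1 val) /= /val_inj ->.
  + by have := fKW i l; rewrite /f -eq_f (negbTE (g_irr _)).
  + by have := fKW j k; rewrite /f eq_f (negbTE (g_irr _)).
  + by move: eq_f => /enum_val_inj /(congr1 val) /= /val_inj ->.
- case=> [i|k] [j|l] //= adj_ij; rewrite ?fKW // 1?g_sym ?fKW //.
  apply: cliqueK; rewrite ?fK //; apply: contra adj_ij.
  by move=> /eqP /enum_val_inj /(congr1 val) /= /val_inj ->.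
Qed.

Lemma common_nbhdU1 U K x :
  common_nbhd U (x |: K) = common_nbhd U K :&: [set u in U | g x u].
Proof.
apply/setP => u; rewrite !inE; case: (u \in U) => //=.
apply/forall_inP/andP => [adj | [/forall_inP adj gxu] y].
  by split; [apply/forall_inP => y yK | ]; apply: adj; rewrite !inE ?yK ?orbT ?eqxx.
by move=> /setU1P [-> // | /adj].
Qed.

Lemma contains_B_clique p q : (0 < q)%N -> contains_subgraph (@B_adj p q) g ->
  exists2 K : {set T}, #|K| = p.+1 & clique K.
Proof.
move=> q_gt0 [f [f_inj f_hom]]; pose z0 := Ordinal q_gt0.
exists (f @: (inr z0 |: [set inl i | i : 'I_p])).
  rewrite card_imset // cardsU1 card_imset; last exact: inl_inj.
  by rewrite card_ord; case: imsetP => // -[].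
move=> _ _ /imsetP [a aD ->] /imsetP [b bD ->] fab; apply: f_hom.
move: aD bD fab; rewrite !inE => /predU1P [-> | /imsetP [i _ ->]].
  by case/predU1P => [-> | /imsetP [j _ ->]]; rewrite ?eqxx.
by case/predU1P => [-> | /imsetP [j _ ->]] //= fij; apply: contra fij => /eqP ->.
Qed.

End Graph.

Lemma handshake n (g : rel 'I_n) : simple_graph g ->
  ((n_edges g).*2 = degsum g setT)%N.
Proof.
move=> [g_irr g_sym].
have E : n_edges g = (\sum_x \sum_y ((val x < val y)%N && g x y))%N.
  rewrite /n_edges -sum1dep_card big_mkcond pair_big /=.
  by apply: eq_bigr => -[x y] _; case: ifP.
rewrite -addnn {1}E exchange_big E -big_split /=; apply: eq_big => [x|x _].
  by rewrite inE.
rewrite deg_inE -big_split /=; apply: eq_big => [y|y _]; first by rewrite inE.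
rewrite (g_sym y x); case: (ltngtP (val x) (val y)) => [||/val_inj ->] //=.
  by rewrite addn0.
by rewrite (negbTE (g_irr y)).
Qed.

Section Colouring.
Variables (T : finType) (g : rel T) (k : nat) (col : T -> 'I_k) (f : 'I_k -> T).
Hypothesis col_proper : forall x y, g x y -> col x != col y.
Hypothesis f_adj : forall r r', r != r' -> g (f r) (f r').

Lemma clique_colour_onto x : exists r, col x = col (f r).
Proof.
have colf_inj : injective (col \o f).
  move=> r r' /= eq_col; have [// | neq_r] := eqVneq r r'.
  by have := col_proper (f_adj neq_r); rewrite eq_col eqxx.
have [h _ fcolK] := injF_bij colf_inj.
by exists (h (col x)); rewrite [RHS](fcolK (col x)).
Qed.

Lemma clique_colour_forced x r0 :
  (forall r, r != r0 -> g x (f r)) -> col x = col (f r0).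
Proof.
move=> adj_x; have [r col_x] := clique_colour_onto x.
have [<- // | neq_r] := eqVneq r r0.
by have := col_proper (adj_x _ neq_r); rewrite -col_x eqxx.
Qed.

End Colouring.

(* Vertices 0, 1, 2 get labels 0, 1, 2 and vertex i >= 3 gets label 3 + i mod p.
   Labels 0..4 form a 5-cycle and all other pairs of distinct labels are adjacent,
   so pentagon_blowup n p is a blow-up of C5 joined with K_(p-2). *)
Definition label (p i : nat) : nat := if (i < 3)%N then i else 3 + i %% p.

Definition label_adj (x y : nat) : bool :=
  if (x < 5) && (y < 5) then (x.+1 %% 5 == y) || (y.+1 %% 5 == x) else x != y.

Definition pentagon_blowup (n p : nat) : rel 'I_n :=
  fun i j => label_adj (label p i) (label p j).
Arguments pentagon_blowup : clear implicits.

Lemma label_adj_irr x : ~~ label_adj x x.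
Proof. by rewrite /label_adj andbb orbb eqxx; do 5?case: x => [// | x]. Qed.

Lemma label_adj_sym x y : label_adj x y = label_adj y x.
Proof. by rewrite /label_adj andbC; case: ifP; rewrite 1?orbC // eq_sym. Qed.

Lemma label_adj_triangle_free x y z : (x < 5)%N -> (y < 5)%N -> (z < 5)%N ->
  label_adj x y -> label_adj y z -> label_adj x z -> False.
Proof.
by rewrite /label_adj; do 5?[case: x => [|x]] => //; do 5?[case: y => [|y]] => //;
  do 5?[case: z => [|z]].
Qed.

Lemma label_adj_shift r r' : r != r' -> label_adj (3 + r) (3 + r').
Proof.
rewrite /label_adj; case: ifP => [/andP [r_lt r'_lt] | _]; last by rewrite eqn_add2l.
by case: r r_lt => [|[|r]] //; case: r' r'_lt => [|[|r']].
Qed.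

Lemma label_adj0 r : r != 0 -> label_adj 0 (3 + r).
Proof. by case: r => [|[|r]]. Qed.

Lemma label_adj1 r : (2 <= r)%N -> label_adj 1 (3 + r).
Proof. by case: r => [|[|r]]. Qed.

Lemma label_adj2 r : r != 1 -> label_adj 2 (3 + r).
Proof. by case: r => [|[|r]]. Qed.

Lemma label_ge3 p i : (3 <= i)%N -> label p i = 3 + i %% p.
Proof. by rewrite /label => /leq_gtF ->. Qed.

Lemma pentagon_blowup_simple (n p : nat) : simple_graph (pentagon_blowup n p).
Proof.
by split=> [x | x y]; rewrite /pentagon_blowup ?label_adj_irr // label_adj_sym.
Qed.

Lemma pentagon_blowup_not_colorable n p : (3 <= p)%N -> (2 * p <= n)%N ->
  chi_gt (pentagon_blowup n p) p.
Proof.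
move=> p_ge3 n_ge [col col_proper].
have v_lt (r : 'I_p) : (p + r < n)%N by have := ltn_ord r; lia.
pose v r := Ordinal (v_lt r).
have label_v r : label p (v r) = 3 + r.
  by rewrite label_ge3 /= ?modnDl ?modn_small //; lia.
have v_clique r r' : r != r' -> pentagon_blowup n p (v r) (v r').
  by rewrite /pentagon_blowup !label_v; exact: label_adj_shift.
have n_gt k : (k < 3 -> k < n)%N by lia.
pose x k (k_lt : (k < 3)%N) := Ordinal (n_gt k k_lt).
have col_x0 (r : 'I_p) : (r : nat) = 0 -> col (x 0 isT) = col (v r).
  move=> r0; apply: (clique_colour_forced col_proper v_clique) => r' neq_r'.
  by rewrite /pentagon_blowup label_v label_adj0 // -r0.
have col_x2 (r : 'I_p) : (r : nat) = 1 -> col (x 2 isT) = col (v r).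
  move=> r1; apply: (clique_colour_forced col_proper v_clique) => r' neq_r'.
  by rewrite /pentagon_blowup label_v label_adj2 // -r1.
(* The clique v uses every colour; the colours of vertices 0 and 2 are forced to
   those of v 0 and v 1, and vertex 1 is adjacent to 0, 2 and every v r, r >= 2. *)
have [r col_x1] := clique_colour_onto col_proper v_clique (x 1 isT).
suff [y adj_y col_y] : exists2 y, pentagon_blowup n p (x 1 isT) y & col y = col (v r).
  by have := col_proper _ _ adj_y; rewrite col_y -col_x1 eqxx.
have [r0 | r_ne0] := eqVneq (r : nat) 0; first by exists (x 0 isT); last exact: col_x0.
have [r1 | r_ne1] := eqVneq (r : nat) 1; first by exists (x 2 isT); last exact: col_x2.
by exists (v r); rewrite // /pentagon_blowup label_v; apply: label_adj1; lia.
Qed.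

Lemma label_lt p i : (0 < p)%N -> (label p i < p + 3)%N.
Proof.
move=> p_gt0; rewrite /label; case: (ltnP i 3) => [|_]; first by lia.
by have := ltn_pmod i p_gt0; lia.
Qed.

Lemma pentagon_blowup_clique_card n p (K : {set 'I_n}) : (3 <= p)%N ->
  clique (pentagon_blowup n p) K -> (#|K| <= p)%N.
Proof.
move=> p_ge3 cliqueK.
have label_inj : {in K &, injective (fun v : 'I_n => label p v)}.
  move=> x y xK yK eq_l; apply/eqP; apply: contraT => neq_xy.
  have := cliqueK x y xK yK neq_xy.
  by rewrite /pentagon_blowup eq_l (negbTE (label_adj_irr _)).
set Low := [set v : 'I_n | (label p v < 5)%N].
rewrite -(cardsID Low K).
have low_le2 : (#|K :&: Low| <= 2)%N.
  rewrite leqNgt; apply/card_gt2P => -[x [y [z [[]]]]].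
  rewrite !inE => /andP [xK lx] /andP [yK ly] /andP [zK lz] [xy yz zx].
  apply: (label_adj_triangle_free lx ly lz); apply: cliqueK => //.
  by rewrite eq_sym.
have high_le : (#|K :\: Low| <= p - 2)%N.
  apply: (@leq_card_in_nat _ _ (fun v : 'I_n => label p v - 5)) => [x y | x].
    rewrite !inE => /andP [lx xK] /andP [ly yK] /= eq_l.
    by apply: label_inj => //; rewrite -ltnNge in lx ly; lia.
  by rewrite !inE => /andP [lx _]; have := label_lt x (ltnW (ltnW p_ge3)); lia.
by apply: leq_trans (leq_add low_le2 high_le) _; lia.
Qed.

Lemma pentagon_blowup_B_free n p q : (3 <= p)%N -> (0 < q)%N ->
  ~ contains_subgraph (@B_adj p q) (pentagon_blowup n p).
Proof.
move=> p_ge3 q_gt0 /(contains_B_clique q_gt0) [K cardK /pentagon_blowup_clique_card].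
by rewrite cardK ltnn => /(_ p_ge3).
Qed.

Lemma pentagon_blowup_deg n p (i : 'I_n) : (3 <= p)%N -> (3 <= i)%N ->
  (n <= deg (pentagon_blowup n p) i + (n %/ p + 4))%N.
Proof.
move=> p_ge3 i_ge3; set N := [set u | pentagon_blowup n p i u].
have non_nbrs :
    ~: N \subset [set u : 'I_n | u < 3] :|: [set u : 'I_n | u %% p == i %% p].
  apply/subsetP => u; rewrite !inE; apply: contraR; rewrite negb_or -leqNgt.
  move=> /andP [u_ge3 res_u]; rewrite /pentagon_blowup !label_ge3 //.
  by apply: label_adj_shift; rewrite eq_sym.
rewrite -{1}(card_ord n) -(cardsC N) leq_add2l.
apply: leq_trans (subset_leq_card non_nbrs) _; apply: leq_trans (leq_card_setU _ _).1 _.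
have := card_ord_lt n 3; have := @card_residue_class n p (i %% p) (ltnW (ltnW p_ge3)).
lia.
Qed.

Lemma pentagon_blowup_edges n p : (3 <= p)%N ->
  (n * n <= (n_edges (pentagon_blowup n p)).*2 + n * (n %/ p + 7))%N.
Proof.
move=> p_ge3; rewrite (handshake (pentagon_blowup_simple n p)) /degsum.
have deg_v (v : 'I_n) :
    (n <= deg_in (pentagon_blowup n p) setT v + (n %/ p + 4) + n * (v < 3))%N.
  rewrite deg_in_setT; case: (ltnP v 3) => v3; first by rewrite muln1 leq_addl.
  by rewrite muln0 addn0 pentagon_blowup_deg.
have low : (\sum_(v in [set: 'I_n]) (v < 3) <= 3)%N.
  rewrite -card_set_in_sum; apply: leq_trans (card_ord_lt n 3).
  by apply: subset_leq_card; apply/subsetP => v; rewrite !inE.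
have : (\sum_(v in [set: 'I_n]) n <= \sum_(v in [set: 'I_n])
    (deg_in (pentagon_blowup n p) setT v + (n %/ p + 4) + n * (v < 3)))%N.
  by apply: leq_sum => v _; exact: deg_v.
rewrite !big_split /= !sum_nat_const !cardsT !card_ord -big_distrr /=.
move=> /leq_trans; apply; rewrite -addnA leq_add2l.
rewrite -!mulnDr leq_mul2l -addnA leq_add2l; apply/orP; right.
exact: leq_add (leqnn 4) low.
Qed.

Local Open Scope ring_scope.

Section Density.
Variables (R : realType) (T : finType) (g : rel T).
Hypothesis g_simple : simple_graph g.

Definition potential (c : R) (U : {set T}) : R :=
  (degsum g U)%:R - c * (#|U| * #|U|.+1)%:R.

Lemma potential_setD1 c (U : {set T}) v :
  v \in U -> (deg_in g U v)%:R < c * #|U|%:R -> potential c U <= potential c (U :\ v).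
Proof.
move=> vU low_v; rewrite /potential.
have := degsum_setD1 g_simple vU; rewrite -(ler_nat R) natrD natrM => ds_v.
rewrite [#|U|](cardsD1 v) vU /= in low_v *.
rewrite !natrM -!natr1 in low_v *; nra.
Qed.

Lemma min_degree_subset c (U : {set T}) : exists V : {set T},
  [/\ V \subset U, potential c U <= potential c V &
       {in V, forall v, c * #|V|%:R <= (deg_in g V v)%:R}].
Proof.
elim: {U}_.+1 {-2}U (ltnSn #|U|) => // m IH U cardU.
have [/exists_inP [v vU low_v] | all_high] :=
  boolP [exists v in U, (deg_in g U v)%:R < c * #|U|%:R].
  have [|V [sVU ge_pot high_V]] := IH (U :\ v).
    by rewrite -ltnS (leq_trans _ cardU) // ltnS [#|U|](cardsD1 v) vU.
  exists V; split=> //; first exact: subset_trans sVU (subsetDl _ _).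
  by apply: le_trans ge_pot; exact: potential_setD1.
exists U; split=> // v vU; rewrite leNgt; apply: contra all_high => low_v.
by apply/exists_inP; exists v.
Qed.

Lemma potential_le_sq c (U : {set T}) : 0 <= c -> potential c U <= #|U|%:R ^+ 2.
Proof.
move=> c_ge0; rewrite /potential -natrX.
have := degsum_le_sq g U; rewrite -(ler_nat R).
have : 0 <= c * (#|U| * #|U|.+1)%:R by rewrite mulr_ge0.
lra.
Qed.

Lemma greedy_clique (c : R) (U : {set T}) j : (0 < #|U|)%N ->
  {in U, forall v, c * #|U|%:R <= (deg_in g U v)%:R} ->
  (forall i, (i < j)%N -> i%:R * (1 - c) < 1) ->
  exists K : {set T}, [/\ #|K| = j, clique g K &
    #|U|%:R * (1 - j%:R * (1 - c)) <= #|common_nbhd g U K|%:R].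
Proof.
have [g_irr g_sym] := g_simple.
move=> U_gt0 high_U; elim: j => [|j IH] j_small.
  exists set0; split; [exact: cards0 | by move=> x; rewrite inE |].
  rewrite mul0r subr0 mulr1 ler_nat subset_leq_card //.
  by apply/subsetP => u uU; rewrite inE uU; apply/forall_inP => x; rewrite inE.
have [K [cardK cliqueK large_W]] := IH (fun i ij => j_small i (ltnW ij)).
set W := common_nbhd g U K in large_W.
have : 0 < #|W|%:R :> R.
  apply: lt_le_trans large_W; apply: mulr_gt0; first by rewrite ltr0n.
  by rewrite subr_gt0 j_small.
rewrite ltr0n => /card_gt0P [x xW].
move: (xW); rewrite inE => /andP [xU /forall_inP adj_Kx].
have xK : x \notin K by apply: contraNN (g_irr x) => /adj_Kx.
set N := [set u in U | g x u].
exists (x |: K); split.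
- by rewrite cardsU1 xK cardK.
- move=> y z; rewrite !inE => /predU1P [-> | yK] /predU1P [-> | zK].
  + by rewrite eqxx.
  + by rewrite g_sym adj_Kx.
  + by rewrite adj_Kx.
  + exact: cliqueK.
rewrite common_nbhdU1 -/W.
have : #|W :|: N|%:R + #|W :&: N|%:R = #|W|%:R + #|N|%:R :> R.
  by rewrite -!natrD cardsUI.
have : #|W :|: N|%:R <= #|U|%:R :> R.
  rewrite ler_nat subset_leq_card //.
  by apply/subsetP => u; rewrite !inE => /orP [] /andP [].
have : c * #|U|%:R <= #|N|%:R by exact: high_U.
rewrite -natr1; nra.
Qed.

Lemma potential_large_contains_B p q (eta x : R) (U : {set T}) :
  (0 < p)%N -> 0 < eta -> 0 < x -> q%:R <= 2 * eta ^+ 3 * x ->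
  (2 * eta * x) ^+ 2 <= potential ((p%:R - 1) / p%:R + eta ^+ 2) U ->
  contains_subgraph (@B_adj p q) g.
Proof.
move=> p_gt0 eta_gt0 x_gt0 q_small.
set c := _ + _ => large_pot.
have p_pos : 0 < p%:R :> R by rewrite ltr0n.
have one_sub_c : 1 - c = p%:R^-1 - eta ^+ 2 by rewrite /c; field; rewrite lt0r_neq0.
have c_ge0 : 0 <= c by rewrite addr_ge0 ?sqr_ge0 // divr_ge0 ?subr_ge0 ?ler1n.
have [V [_ pot_V high_V]] := min_degree_subset c U.
have large_V : 2 * eta * x <= #|V|%:R.
  have := le_trans (le_trans large_pot pot_V) (potential_le_sq _ c_ge0).
  by rewrite ler_sqr // nnegrE ?ler0n // !mulr_ge0 // ltW.
have V_gt0 : (0 < #|V|)%N.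
  by rewrite -(ltr0n R); apply: lt_le_trans large_V; rewrite !mulr_gt0.
have [|K [cardK cliqueK large_W]] := greedy_clique V_gt0 high_V (j := p).
  move=> i ip; rewrite one_sub_c; apply: (@le_lt_trans _ _ (i%:R / p%:R)).
    by rewrite mulrBr lerBlDr lerDl mulr_ge0 ?ler0n ?sqr_ge0.
  by rewrite ltr_pdivrMr // mul1r ltr_nat.
apply: (clique_common_nbhd_contains_B g_simple cardK cliqueK).
rewrite -(ler_nat R); apply: le_trans large_W; rewrite one_sub_c.
have -> : 1 - p%:R * (p%:R^-1 - eta ^+ 2) = p%:R * eta ^+ 2 by field; rewrite lt0r_neq0.
have := ler_wpM2r (sqr_ge0 eta) large_V.
have : 0 <= (p%:R - 1) * (#|V|%:R * eta ^+ 2).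
  by apply: mulr_ge0; [rewrite subr_ge0 ler1n | rewrite mulr_ge0 ?sqr_ge0].
nra.
Qed.

End Density.

Lemma deletion_potential_bound (R : realType) (a eta n k d d' : R) :
  0 <= a <= 1 -> 0 < eta < 1 -> eta * n < k <= eta * n + 1 -> k <= n ->
  10 < eta ^+ 3 * n -> a * n ^+ 2 - 7 * n <= d ->
  d <= d' + 2 * k * ((a - 5 * eta) * n) ->
  (2 * eta * n) ^+ 2 <= d' - (a + eta ^+ 2) * ((n - k) * (n - k + 1)).
Proof.
move=> /andP [a_ge0 a_le1] /andP [eta_gt0 eta_lt1] /andP [k_gt k_le] k_len large_n.
move=> d_ge d_le.
have eta2_le : eta ^+ 2 <= eta by rewrite expr2 ler_piMl // ltW.
have eta3_le : eta ^+ 3 <= eta ^+ 2 by rewrite exprS ler_piMl ?sqr_ge0 // ltW.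
have n_ge0 : 0 <= n.
  by rewrite -(pmulr_rge0 _ (exprn_gt0 3 eta_gt0)); apply: le_trans (ltW large_n).
have k_ge0 : 0 <= k by apply: le_trans (ltW k_gt); rewrite mulr_ge0 // ltW.
have large_eta2_n : 10 < eta ^+ 2 * n.
  by apply: lt_le_trans large_n _; rewrite ler_wpM2r.
have large_eta_n : 10 < eta * n.
  by apply: lt_le_trans large_eta2_n _; rewrite ler_wpM2r.
have ak2_le : a * k ^+ 2 <= k ^+ 2 by rewrite ler_piMl ?sqr_ge0.
have tail_sq_le : eta ^+ 2 * (n - k) ^+ 2 <= eta ^+ 2 * n ^+ 2.
  by rewrite ler_wpM2l ?sqr_ge0 // ler_sqr ?nnegrE ?subr_ge0 // lerBlDr lerDl.
have tail_le : (a + eta ^+ 2) * (n - k) <= 2 * n.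
  by apply: ler_pM; [rewrite addr_ge0 ?sqr_ge0 | rewrite subr_ge0 | lra | lra].
have k_window : eta * n * (9 * eta * n - 1) <= k * (10 * eta * n - k).
  by apply: ler_pM; [rewrite mulr_ge0 // ltW | lra | exact: ltW | lra].
have n_le_sq : 10 * n <= 4 * (eta ^+ 2 * n) * n.
  by rewrite ler_wpM2r //; lra.
nra.
Qed.

Lemma low_degree_vertices_contains_B (R : realType) (T : finType) (g : rel T)
    p q (eta : R) :
  simple_graph g -> (0 < p)%N -> 0 < eta < 1 -> q%:R + 10 < eta ^+ 3 * #|T|%:R ->
  (p%:R - 1) / p%:R * #|T|%:R ^+ 2 - 7 * #|T|%:R <= (degsum g setT)%:R :> R ->
  eta * #|T|%:R <
    #|[set v | (deg g v)%:R <= ((p%:R - 1) / p%:R - 5 * eta) * #|T|%:R]|%:R ->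
  contains_subgraph (@B_adj p q) g.
Proof.
set n := #|T|%:R; set a := (p%:R - 1) / p%:R; set S := [set v | _].
move=> g_simple p_gt0 /andP [eta_gt0 eta_lt1] large_n dense large_S.
have eta_n_ge0 : 0 <= eta * n by rewrite mulr_ge0 // ltW.
pose k := (Num.truncn (eta * n)).+1.
have k_gt : eta * n < k%:R := truncnS_gt _.
have k_le : k%:R <= eta * n + 1 by rewrite -natr1 lerD2r truncn_le.
have [S' sS'S cardS'] : exists2 S' : {set T}, S' \subset S & #|S'| = k.
  by apply: exists_subset_card; rewrite truncn_lt_nat.
have k_len : k%:R <= n by rewrite -cardS' ler_nat max_card.
have deg_S' : (\sum_(v in S') deg_in g setT v)%:R <= k%:R * ((a - 5 * eta) * n).
  rewrite natr_sum -cardS' mulr_natl -sumr_const; apply: ler_sum => v /(subsetP sS'S).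
  by rewrite inE deg_in_setT.
have degsum_compl : (degsum g setT)%:R <=
    (degsum g (~: S'))%:R + 2 * k%:R * ((a - 5 * eta) * n) :> R.
  have := degsum_setD g_simple setT S'.
  by rewrite setTD setTI -(ler_nat R) natrD natrM; lra.
have card_compl : #|~: S'|%:R = n - k%:R.
  by rewrite -cardS' /n -(cardsC S') natrD; lra.
apply: (potential_large_contains_B g_simple (x := n) (U := ~: S') p_gt0 eta_gt0).
- rewrite -(pmulr_rgt0 _ (exprn_gt0 3 eta_gt0)); apply: le_lt_trans large_n.
  by rewrite addr_ge0.
- have : 0 <= q%:R :> R := ler0n R q.
  lra.
rewrite /potential natrM -[#|~: S'|.+1%:R]natr1 card_compl.
apply: (deletion_potential_bound _ _ _ k_len _ dense degsum_compl).
- have p_pos : 0 < p%:R :> R by rewrite ltr0n.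
  by rewrite divr_ge0 ?subr_ge0 ?ler1n // ler_pdivrMr // mul1r /=; lra.
- by rewrite eta_gt0.
- by rewrite k_gt.
- by apply: le_lt_trans large_n; rewrite lerDr.
Qed.

Lemma calG_degsum_ge (R : realType) n p q (G : rel 'I_n) :
  (3 <= p)%N -> (0 < q)%N -> (2 * p <= n)%N -> in_calG p q G ->
  (p%:R - 1) / p%:R * n%:R ^+ 2 - 7 * n%:R <= (degsum G setT)%:R :> R.
Proof.
move=> p_ge3 q_gt0 n_ge [[G_simple _] G_max].
have F_admissible : admissible p q (pentagon_blowup n p).
  split; first exact: pentagon_blowup_simple.
  by split; [exact: pentagon_blowup_not_colorable | exact: pentagon_blowup_B_free].
have := G_max _ F_admissible; rewrite -leq_double (handshake G_simple) => dense_G.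
have := leq_trans (pentagon_blowup_edges n p_ge3) (leq_add dense_G (leqnn _)).
rewrite -(ler_nat R) natrD !natrM natrD => dense_n.
have p_pos : 0 < p%:R :> R by rewrite ltr0n; lia.
have div_le : n%:R * (n %/ p)%:R <= n%:R ^+ 2 / p%:R :> R.
  by rewrite expr2 -mulrA ler_wpM2l // ler_pdivlMr // -natrM ler_nat leq_divM.
have -> : (p%:R - 1) / p%:R * n%:R ^+ 2 = n%:R ^+ 2 - n%:R ^+ 2 / p%:R :> R.
  by field; rewrite lt0r_neq0.
move: dense_n; rewrite expr2 mulrDr; lra.
Qed.

Theorem lemma3p2 (R : realType) (p q : nat) (eta : R) :
  (3 <= p)%N -> (1 <= q)%N -> 0 < eta -> eta < 1 / (7 * (p ^ 5 * q)%:R) ->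
  exists N : nat, forall (n : nat) (G : rel 'I_n), (N <= n)%N ->
    in_calG p q G ->
    (forall F : rel 'I_n, in_calG p q F -> (mindeg G <= mindeg F)%N) ->
    (#|[set v : 'I_n | (deg G v)%:R <= ((p%:R - 1) / p%:R - 5 * eta) * n%:R]|%:R
       <= eta * n%:R).
Proof.
move=> p_ge3 q_gt0 eta_gt0 eta_small.
have eta_lt1 : eta < 1.
  have pq_gt0 : (0 < 7 * (p ^ 5 * q))%N by rewrite !muln_gt0 q_gt0 andbT; lia.
  apply: lt_le_trans eta_small _.
  by rewrite -natrM ler_pdivrMr ?ltr0n // mul1r ler1n.
have eta3_gt0 : 0 < eta ^+ 3 := exprn_gt0 3 eta_gt0.
exists (maxn (2 * p) (Num.bound ((q%:R + 10) / eta ^+ 3))) => n G.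
rewrite geq_max => /andP [n_ge2p n_large] G_ext _.
have [[G_simple [_ G_B_free]] _] := G_ext.
rewrite leNgt; apply/negP => large_S; apply: G_B_free.
apply: (low_degree_vertices_contains_B (eta := eta) G_simple); rewrite ?card_ord //.
- lia.
- by rewrite eta_gt0.
- rewrite -ltr_pdivrMl // mulrC; apply: lt_le_trans (archi_boundP _) _.
    by rewrite divr_ge0 ?ltW // ltr_wpDl.
  by rewrite ler_nat.
- exact: calG_degsum_ge p_ge3 q_gt0 n_ge2p G_ext.
Qed.
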